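(* For the $k$-server problem on the line, for every instance $I$, every prediction, and every $\lambda\in(0,1]$, there is $c\ge0$ depending only on the initial configuration such that $\mathrm{LambdaDC}(I)\le\beta(k)\cdot\mathrm{OPT}(I)+c$, where $\beta(k)=\sum_{i=0}^{k-1}\lambda^{-i}$.
   Context: The $k$-server problem on the line: servers on $\mathbb{R}$ labeled $s_1\le\dots\le s_k$, requests revealed online and served by moving a server to them; cost = total distance moved; $\mathrm{OPT}(I)$ is the optimal offline cost. A prediction gives for each request $r_t$ an index $p_t\in\{1,\dots,k\}$. LambdaDC with parameter $\lambda$: if $r_t<s_1$ or $r_t>s_k$, move only the closest server; if $s_i<r_t<s_{i+1}$ and $p_t\le i$, move $s_i$ at speed $1$ and $s_{i+1}$ at speed $\lambda$ towards $r_t$ until one reaches it; if $p_t\ge i+1$, the speeds are swapped. *)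

From Stdlib Require Import Reals Lra List.
From Coquelicot Require Import Coquelicot.
Open Scope R_scope.

(* Configurations of k servers on the line: s : nat -> R, server j at s j,
   for j = 1..k (values at other indices are irrelevant). *)

Fixpoint sumR (n : nat) (f : nat -> R) : R :=
  match n with O => 0 | S m => sumR m f + f m end.

Definition upd (s : nat -> R) (i : nat) (v : R) : nat -> R :=
  fun j => if Nat.eqb j i then v else s j.

Fixpoint find_gap (s : nat -> R) (r : R) (n : nat) : option nat :=
  match n with
  | O => None
  | S m =>
    match find_gap s r m with
    | Some i => Some i
    | None =>
      if Rlt_dec (s (S m)) r then
        if Rlt_dec r (s (S (S m))) then Some (S m) else None
      else None
    end
  end.

(* One step of LambdaDC on sorted configuration s (servers 1..k), request r,
   prediction p in {1..k}.  Returns (new configuration, cost of the step). *)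
Definition ldc_step (lam : R) (k : nat) (s : nat -> R) (r : R) (p : nat)
  : (nat -> R) * R :=
  if Rlt_dec r (s 1%nat) then (upd s 1%nat r, s 1%nat - r)
  else if Rlt_dec (s k) r then (upd s k r, r - s k)
  else match find_gap s r (k - 1) with
       | None => (s, 0)   (* r coincides with a server position *)
       | Some i =>
         let a := s i in
         let b := s (S i) in
         let va := if Nat.leb p i then 1 else lam in
         let vb := if Nat.leb p i then lam else 1 in
         (* time until the first of the two reaches r *)
         let t := Rmin ((r - a) / va) ((b - r) / vb) in
         (upd (upd s i (a + va * t)) (S i) (b - vb * t), (va + vb) * t)
       end.

Fixpoint ldc_cost (lam : R) (k : nat) (s : nat -> R) (rs : list R)
  (ps : nat -> nat) (t : nat) : R :=
  match rs with
  | nil => 0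
  | r :: rs' =>
    let '(s', c) := ldc_step lam k s r (ps t) in
    c + ldc_cost lam k s' rs' ps (S t)
  end.

Definition LambdaDC (lam : R) (k : nat) (s0 : nat -> R) (rs : list R)
  (ps : nat -> nat) : R := ldc_cost lam k s0 rs ps 0.

(* Offline schedules: sched t is the configuration after serving the first
   t requests; sched 0 is the initial configuration; after step t+1 some
   server sits on request t. *)
Definition feasible (k : nat) (s0 : nat -> R) (rs : list R)
  (sched : nat -> nat -> R) : Prop :=
  (forall j, (1 <= j <= k)%nat -> sched 0%nat j = s0 j) /\
  (forall t, (t < length rs)%nat ->
     exists j, (1 <= j <= k)%nat /\ sched (S t) j = nth t rs 0).

Definition sched_cost (k : nat) (rs : list R) (sched : nat -> nat -> R) : R :=
  sumR (length rs) (fun t =>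
    sumR k (fun j => Rabs (sched (S t) (S j) - sched t (S j)))).

Definition OPT (k : nat) (s0 : nat -> R) (rs : list R) : R :=
  real (Glb_Rbar (fun x => exists sched,
           feasible k s0 rs sched /\ x = sched_cost k rs sched)).

Definition beta (lam : R) (k : nat) : R := sumR k (fun i => / (lam ^ i)).

From Stdlib Require Import Reals Lra Lia List Permutation Sorted.
From Coquelicot Require Import Coquelicot.
Open Scope R_scope.
Import ListNotations.

(* A potential-function argument.  Match the servers s_1 <= ... <= s_k of
   LambdaDC in order with the sorted offline servers u_1 <= ... <= u_k and put
     Phi = sum_j m_j |s_j - u_j| + sum_j g_j (s_(j+1) - s_j),
   m_j = beta(j) + beta(k+1-j) - 1 <= beta(k),   g_j = beta(j) beta(k-j) / lam.
   An offline move raises Phi by at most beta(k) times its cost, since re-sorting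
   the offline servers never increases the matching distance.  Once the request
   is covered by an offline server, every step of LambdaDC lowers Phi by at least
   its cost: moving an extreme server pays for itself exactly, and moving the two
   neighbours of the request by x and y does so whenever lam x <= y and
   lam y <= x, which holds for both speed assignments.  Summing, LambdaDC <= beta(k) * cost + Phi_0 for every feasible schedule,
   and Phi_0 depends only on the initial configuration. *)

Lemma sumR_ext n f g : (forall j, (j < n)%nat -> f j = g j) -> sumR n f = sumR n g.
Proof.
  induction n as [|n IH]; intros H; simpl; [reflexivity|].
  rewrite IH, H; auto.
Qed.

Lemma sumR_le n f g : (forall j, (j < n)%nat -> f j <= g j) -> sumR n f <= sumR n g.
Proof.
  induction n as [|n IH]; intros H; simpl; [lra|].
  apply Rplus_le_compat; auto.
Qed.

Lemma sumR_nonneg n f : (forall j, (j < n)%nat -> 0 <= f j) -> 0 <= sumR n f.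
Proof.
  intros H. apply Rle_trans with (sumR n (fun _ => 0)).
  - clear H. induction n; simpl; lra.
  - apply sumR_le; auto.
Qed.

Lemma sumR_plus n f g : sumR n (fun j => f j + g j) = sumR n f + sumR n g.
Proof. induction n as [|n IH]; simpl; [lra|]. rewrite IH; ring. Qed.

Lemma sumR_scal n c f : sumR n (fun j => c * f j) = c * sumR n f.
Proof. induction n as [|n IH]; simpl; [lra|]. rewrite IH; ring. Qed.

Lemma sumR_succ_shift n f : sumR (S n) f = f 0%nat + sumR n (fun j => f (S j)).
Proof. induction n as [|n IH]; simpl in *; [lra|]. rewrite IH; ring. Qed.

Lemma sumR_update n f g p : (p < n)%nat ->
  (forall j, (j < n)%nat -> j <> p -> f j = g j) ->
  sumR n g = sumR n f + (g p - f p).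
Proof.
  induction n as [|n IH]; intros Hp H; [lia|]. simpl.
  destruct (Nat.eq_dec p n) as [->|Hpn].
  - rewrite (sumR_ext n f g); [ring|]. intros; apply H; lia.
  - rewrite IH, (H n); [ring|lia|lia|lia|]. intros; apply H; lia.
Qed.

Lemma sumR_update2 n f g p1 p2 : (p1 < n)%nat -> (p2 < n)%nat -> p1 <> p2 ->
  (forall j, (j < n)%nat -> j <> p1 -> j <> p2 -> f j = g j) ->
  sumR n g = sumR n f + (g p1 - f p1) + (g p2 - f p2).
Proof.
  intros H1 H2 H12 H.
  set (h := fun j => if Nat.eq_dec j p1 then g j else f j).
  assert (Hh1 : h p1 = g p1) by (unfold h; destruct Nat.eq_dec; congruence).
  assert (Hh2 : h p2 = f p2) by (unfold h; destruct Nat.eq_dec; congruence).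
  rewrite (sumR_update n h g p2), (sumR_update n f h p1), Hh1, Hh2; auto.
  - intros j Hj Hj1. unfold h. destruct Nat.eq_dec; congruence.
  - intros j Hj Hj2. unfold h. destruct Nat.eq_dec; auto.
Qed.

Section Beta.

Variable lam : R.
Hypothesis lam_pos : 0 < lam.
Hypothesis lam_le_1 : lam <= 1.

Lemma inv_lam_ge_1 : 1 <= / lam.
Proof. rewrite <- Rinv_1. apply Rinv_le_contravar; lra. Qed.

Lemma beta_S j : beta lam (S j) = 1 + / lam * beta lam j.
Proof.
  unfold beta. induction j as [|j IH].
  - simpl. field. lra.
  - cbn [sumR] in *. rewrite IH at 1. cbn [pow]. rewrite Rinv_mult. ring.
Qed.

Lemma beta_1 : beta lam 1 = 1.
Proof. rewrite beta_S. change (beta lam 0) with 0. ring. Qed.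

Lemma beta_nonneg j : 0 <= beta lam j.
Proof.
  apply sumR_nonneg. intros i _.
  apply Rlt_le, Rinv_0_lt_compat, pow_lt, lam_pos.
Qed.

Lemma beta_ge_1 j : (1 <= j)%nat -> 1 <= beta lam j.
Proof.
  intros Hj. destruct j as [|j]; [lia|]. rewrite beta_S.
  pose proof (beta_nonneg j). pose proof inv_lam_ge_1. nra.
Qed.

Lemma beta_add_le a b : beta lam (S a) + beta lam (S b) <= beta lam (S (a + b)) + 1.
Proof.
  induction a as [|a IH].
  - rewrite beta_1. simpl. lra.
  - rewrite Nat.add_succ_l, (beta_S (S a)), (beta_S (S (a + b))).
    pose proof inv_lam_ge_1. pose proof (beta_ge_1 (S b) ltac:(lia)). nra.
Qed.

End Beta.

Fixpoint match_dist (u v : list R) : R :=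
  match u, v with
  | x :: u', y :: v' => Rabs (x - y) + match_dist u' v'
  | _, _ => 0
  end.

Lemma match_dist_nth n u v : length u = n -> length v = n ->
  match_dist u v = sumR n (fun j => Rabs (nth j u 0 - nth j v 0)).
Proof.
  revert u v. induction n as [|n IH]; intros u v Hu Hv.
  - destruct u, v; simpl in *; try lia; reflexivity.
  - destruct u as [|x u], v as [|y v]; simpl in Hu, Hv; try lia.
    rewrite sumR_succ_shift. simpl. rewrite (IH u v); auto.
Qed.

Lemma match_dist_perm (A : Type) (f g : A -> R) T T' : Permutation T T' ->
  match_dist (map f T) (map g T) = match_dist (map f T') (map g T').
Proof. induction 1; simpl; lra. Qed.

Lemma match_dist_seq f g a n :
  match_dist (map f (seq a n)) (map g (seq a n))
  = sumR n (fun j => Rabs (f (a + j)%nat - g (a + j)%nat)).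
Proof.
  revert a. induction n as [|n IH]; intros a; [reflexivity|].
  rewrite sumR_succ_shift. simpl. rewrite IH, Nat.add_0_r.
  f_equal. apply sumR_ext. intros j _. rewrite Nat.add_succ_r. reflexivity.
Qed.

Lemma nth_sorted_le l i j : Sorted Rle l -> (i <= j)%nat -> (j < length l)%nat ->
  nth i l 0 <= nth j l 0.
Proof.
  intros Hl. apply Sorted_StronglySorted in Hl; [|intros x y z; apply Rle_trans].
  revert i j. induction Hl as [|x l _ IH Hx]; intros i j Hij Hj; simpl in Hj; [lia|].
  destruct i as [|i], j as [|j]; simpl; try lra; try lia.
  - rewrite Forall_forall in Hx. apply Hx, nth_In. lia.
  - apply IH; lia.
Qed.

Lemma sorted_In_bounds U r : Sorted Rle U -> In r U ->
  nth 0 U 0 <= r <= nth (length U - 1) U 0.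
Proof.
  intros HU Hr. destruct (In_nth U r 0 Hr) as [m [Hm <-]].
  split; apply nth_sorted_le; auto; lia.
Qed.

Lemma sorted_In_same_side U r i : Sorted Rle U -> In r U -> (S i < length U)%nat ->
  (r <= nth i U 0 /\ r <= nth (S i) U 0) \/ (nth i U 0 <= r /\ nth (S i) U 0 <= r).
Proof.
  intros HU Hr Hi. destruct (In_nth U r 0 Hr) as [m [Hm <-]].
  destruct (Nat.le_gt_cases m i); [left|right]; split; apply nth_sorted_le; auto; lia.
Qed.

Lemma sorted_map_seq (f : nat -> R) a n :
  (forall i, (a <= i)%nat -> (S i < a + n)%nat -> f i <= f (S i)) ->
  Sorted Rle (map f (seq a n)).
Proof.
  revert a. induction n as [|n IH]; intros a H; simpl; constructor.
  - apply IH. intros; apply H; lia.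
  - destruct n as [|n]; simpl; constructor. apply H; lia.
Qed.

Section InsertionSort.

Variables (A : Type) (f : A -> R).

Fixpoint insert_by (x : A) (l : list A) : list A :=
  match l with
  | [] => [x]
  | y :: l' => if Rle_dec (f x) (f y) then x :: y :: l' else y :: insert_by x l'
  end.

Lemma insert_by_perm x l : Permutation (insert_by x l) (x :: l).
Proof.
  induction l as [|y l IH]; simpl; [auto|].
  destruct Rle_dec; [auto|].
  eapply perm_trans; [apply perm_skip, IH|]. apply perm_swap.
Qed.

Lemma insert_by_sorted x l : Sorted Rle (map f l) -> Sorted Rle (map f (insert_by x l)).
Proof.
  induction l as [|y l IH]; simpl; intros H; [auto|].
  destruct Rle_dec as [Hxy|Hxy]; simpl; [auto|].
  apply Sorted_inv in H as [Hl Hy]. constructor; [auto|].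
  destruct l as [|z l]; simpl; [constructor; lra|].
  destruct Rle_dec; constructor; [lra|]. inversion Hy; assumption.
Qed.

Lemma Rabs_uncross a b c d : a <= b -> c <= d ->
  Rabs (a - c) + Rabs (b - d) <= Rabs (b - c) + Rabs (a - d).
Proof. intros. unfold Rabs; repeat destruct Rcase_abs; lra. Qed.

Lemma match_dist_insert_by x W u U :
  Sorted Rle (map f W) -> Sorted Rle (u :: U) -> length U = length W ->
  match_dist (map f (insert_by x W)) (u :: U) <= Rabs (f x - u) + match_dist (map f W) U.
Proof.
  revert u U. induction W as [|w W IH]; intros u U HW HU HL; simpl; [lra|].
  destruct Rle_dec as [Hxw|Hxw]; simpl; [lra|].
  destruct U as [|u' U]; simpl in HL; [lia|].
  apply Sorted_inv in HU as [HU Hu]. inversion Hu; subst.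
  apply Sorted_inv in HW as [HW _].
  specialize (IH u' U HW HU ltac:(lia)). simpl in IH.
  pose proof (Rabs_uncross (f w) (f x) u u' ltac:(lra) ltac:(assumption)). lra.
Qed.

Lemma sort_by_match_dist_le V U : Sorted Rle U -> length U = length V ->
  exists W, Permutation W V /\ Sorted Rle (map f W) /\
    match_dist (map f W) U <= match_dist (map f V) U.
Proof.
  revert U. induction V as [|v V IH]; intros U HU HL.
  - exists []. simpl. repeat split; auto. lra.
  - destruct U as [|u U]; simpl in HL; [lia|].
    destruct (IH U (proj1 (Sorted_inv HU)) ltac:(lia)) as [W [HWV [HW Hd]]].
    exists (insert_by v W). split; [|split].
    + eapply perm_trans; [apply insert_by_perm|]. auto.
    + apply insert_by_sorted; auto.
    + pose proof (match_dist_insert_by v W u U HW HU) as H.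
      rewrite (Permutation_length HWV) in H. specialize (H ltac:(lia)). simpl. lra.
Qed.

End InsertionSort.

Definition sorted_on (k : nat) (s : nat -> R) : Prop :=
  forall i j, (1 <= i)%nat -> (i <= j)%nat -> (j <= k)%nat -> s i <= s j.

Lemma upd_eq s i v : upd s i v i = v.
Proof. unfold upd. rewrite Nat.eqb_refl. reflexivity. Qed.

Lemma upd_neq s i v j : j <> i -> upd s i v j = s j.
Proof. intros H. unfold upd. destruct (Nat.eqb_spec j i); congruence. Qed.

Lemma sorted_on_upd k s q v : sorted_on k s -> (1 <= q <= k)%nat ->
  ((1 < q)%nat -> s (q - 1)%nat <= v) -> ((q < k)%nat -> v <= s (S q)) ->
  sorted_on k (upd s q v).
Proof.
  intros Hs Hq Hl Hr i j Hi Hij Hj.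
  destruct (Nat.eq_dec i q) as [->|Hiq], (Nat.eq_dec j q) as [->|Hjq].
  - rewrite upd_eq. lra.
  - rewrite upd_eq, upd_neq by auto.
    assert (s (S q) <= s j) by (apply Hs; lia). specialize (Hr ltac:(lia)). lra.
  - rewrite upd_eq, upd_neq by auto.
    assert (s i <= s (q - 1)%nat) by (apply Hs; lia). specialize (Hl ltac:(lia)). lra.
  - rewrite !upd_neq by auto. apply Hs; lia.
Qed.

Lemma find_gap_spec s r n i : find_gap s r n = Some i ->
  (1 <= i <= n)%nat /\ s i < r /\ r < s (S i).
Proof.
  revert i. induction n as [|n IH]; intros i H; simpl in H; [discriminate|].
  destruct (find_gap s r n) as [i'|] eqn:E.
  - injection H as <-. destruct (IH i' eq_refl). split; [lia|auto].
  - destruct Rlt_dec; [|discriminate]. destruct Rlt_dec; [|discriminate].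
    injection H as <-. split; [lia|auto].
Qed.

Section Potential.

Variables (lam : R) (k : nat).
Hypothesis lam_pos : 0 < lam.
Hypothesis lam_le_1 : lam <= 1.

(* Server [S q] is matched to [nth q U 0], where [U] is the sorted offline
   configuration.  The gap sum includes the fictitious gaps before [s 1] and
   after [s k]; they get weight [beta lam 0 = 0], so that moving any server
   changes exactly two gap terms. *)
Definition match_weight (q : nat) : R := beta lam (S q) + beta lam (k - q) - 1.

Definition gap_weight (j : nat) : R := / lam * beta lam j * beta lam (k - j).

Definition Phi (s : nat -> R) (U : list R) : R :=
  sumR k (fun q => match_weight q * Rabs (s (S q) - nth q U 0))
  + sumR (S k) (fun j => gap_weight j * (s (S j) - s j)).

Lemma match_weight_bounds q : (q < k)%nat -> 0 <= match_weight q <= beta lam k.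
Proof.
  intros Hq. unfold match_weight.
  pose proof (beta_ge_1 lam lam_pos lam_le_1 (S q) ltac:(lia)).
  pose proof (beta_ge_1 lam lam_pos lam_le_1 (k - q) ltac:(lia)).
  pose proof (beta_add_le lam lam_pos lam_le_1 q (k - S q)) as Hadd.
  replace (S (k - S q)) with (k - q)%nat in Hadd by lia.
  replace (S (q + (k - S q))) with k in Hadd by lia.
  lra.
Qed.

Lemma gap_weight_diff q : (q < k)%nat ->
  gap_weight q - gap_weight (S q) = beta lam (S q) - beta lam (k - q).
Proof.
  intros Hq. unfold gap_weight.
  replace (k - q)%nat with (S (k - S q)) by lia.
  rewrite !beta_S by lra. field. lra.
Qed.

Lemma Phi_upd s U q v : (q < k)%nat ->
  Phi (upd s (S q) v) U = Phi s U
    + match_weight q * (Rabs (v - nth q U 0) - Rabs (s (S q) - nth q U 0))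
    + (beta lam (S q) - beta lam (k - q)) * (v - s (S q)).
Proof.
  intros Hq. rewrite <- gap_weight_diff by exact Hq. unfold Phi.
  rewrite (sumR_update k (fun j => match_weight j * Rabs (s (S j) - nth j U 0))
    (fun j => match_weight j * Rabs (upd s (S q) v (S j) - nth j U 0)) q);
    [| exact Hq | intros j _ Hj; rewrite upd_neq by lia; reflexivity].
  rewrite (sumR_update2 (S k) (fun j => gap_weight j * (s (S j) - s j))
    (fun j => gap_weight j * (upd s (S q) v (S j) - upd s (S q) v j)) q (S q));
    [| lia | lia | lia | intros j _ Hj1 Hj2; rewrite !upd_neq by lia; reflexivity].
  rewrite !upd_eq, (upd_neq s (S q) v q), (upd_neq s (S q) v (S (S q))) by lia.
  ring.
Qed.

Lemma Phi_nonneg s U : sorted_on k s -> 0 <= Phi s U.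
Proof.
  intros Hs. unfold Phi. apply Rplus_le_le_0_compat; apply sumR_nonneg; intros j Hj.
  - apply Rmult_le_pos; [apply match_weight_bounds; lia | apply Rabs_pos].
  - destruct (Nat.eq_dec j 0) as [->|Hj0].
    + unfold gap_weight. change (beta lam 0) with 0. lra.
    + destruct (Nat.eq_dec j k) as [->|Hjk].
      * unfold gap_weight. rewrite Nat.sub_diag. change (beta lam 0) with 0. lra.
      * assert (s j <= s (S j)) by (apply Hs; lia).
        pose proof (inv_lam_ge_1 lam lam_pos lam_le_1).
        pose proof (beta_nonneg lam lam_pos j). pose proof (beta_nonneg lam lam_pos (k - j)).
        unfold gap_weight. apply Rmult_le_pos; [|lra].
        apply Rmult_le_pos; [apply Rmult_le_pos|]; lra.
Qed.

Lemma Phi_match_dist_le s U U' : length U = k -> length U' = k ->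
  Phi s U' <= Phi s U + beta lam k * match_dist U' U.
Proof.
  intros HU HU'. rewrite (match_dist_nth k U' U), <- sumR_scal by auto.
  unfold Phi.
  enough (sumR k (fun q => match_weight q * Rabs (s (S q) - nth q U' 0)) <=
          sumR k (fun q => match_weight q * Rabs (s (S q) - nth q U 0))
          + sumR k (fun q => beta lam k * Rabs (nth q U' 0 - nth q U 0))) by lra.
  rewrite <- sumR_plus. apply sumR_le. intros q Hq.
  pose proof (match_weight_bounds q Hq).
  assert (Htri : Rabs (s (S q) - nth q U' 0)
                 <= Rabs (s (S q) - nth q U 0) + Rabs (nth q U' 0 - nth q U 0))
    by (unfold Rabs; repeat destruct Rcase_abs; lra).
  apply Rmult_le_compat_l with (r := match_weight q) in Htri; [|lra].
  pose proof (Rmult_le_compat_r (Rabs (nth q U' 0 - nth q U 0)) _ _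
    (Rabs_pos (nth q U' 0 - nth q U 0)) (proj2 (match_weight_bounds q Hq))).
  lra.
Qed.

End Potential.

Lemma Rmin_div_bounds p q va vb : 0 <= p -> 0 <= q -> 0 < va -> 0 < vb ->
  let t := Rmin (p / va) (q / vb) in 0 <= t /\ va * t <= p /\ vb * t <= q.
Proof.
  intros Hp Hq Hva Hvb t.
  assert (Hp' : va * (p / va) = p) by (field; lra).
  assert (Hq' : vb * (q / vb) = q) by (field; lra).
  split; [|split].
  - apply Rmin_glb; apply Rdiv_le_0_compat; lra.
  - rewrite <- Hp'. apply Rmult_le_compat_l; [lra|apply Rmin_l].
  - rewrite <- Hq'. apply Rmult_le_compat_l; [lra|apply Rmin_r].
Qed.

Definition serves (k : nat) (rs : list R) (sched : nat -> nat -> R) : Prop :=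
  forall t, (t < length rs)%nat -> exists j, (1 <= j <= k)%nat /\ sched (S t) j = nth t rs 0.

Lemma sched_cost_cons k r rs sched :
  sched_cost k (r :: rs) sched =
  sumR k (fun j => Rabs (sched 1%nat (S j) - sched 0%nat (S j)))
  + sched_cost k rs (fun t => sched (S t)).
Proof. unfold sched_cost. simpl length. rewrite sumR_succ_shift. reflexivity. Qed.

Section Amortization.

Variables (lam : R) (k : nat).
Hypothesis lam_pos : 0 < lam.
Hypothesis lam_le_1 : lam <= 1.
Hypothesis k_pos : (1 <= k)%nat.

Lemma Phi_move_first s U r : r <= s 1%nat -> nth 0 U 0 <= r ->
  (s 1%nat - r) + Phi lam k (upd s 1 r) U = Phi lam k s U.
Proof.
  intros Hs Hu. rewrite (Phi_upd lam k lam_pos) by lia. unfold match_weight.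
  rewrite Nat.sub_0_r, beta_1 by lra.
  rewrite (Rabs_pos_eq (r - _)), (Rabs_pos_eq (s 1%nat - _)) by lra. ring.
Qed.

Lemma Phi_move_last s U r : s k <= r -> r <= nth (k - 1) U 0 ->
  (r - s k) + Phi lam k (upd s k r) U = Phi lam k s U.
Proof.
  intros Hs Hu. pose proof (Phi_upd lam k lam_pos s U (k - 1) r ltac:(lia)) as E.
  unfold match_weight in E.
  replace (S (k - 1)) with k in E by lia. replace (k - (k - 1))%nat with 1%nat in E by lia.
  rewrite beta_1 in E by lra.
  rewrite (Rabs_left1 (r - _)), (Rabs_left1 (s k - _)) in E by lra.
  rewrite E. ring.
Qed.

(* With [A = beta lam (S i)] and [C = beta lam (k - S i)] the amortized cost
   is at most [2 C (y - x / lam)] when both matched offline servers are right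
   of [r], and at most [2 A (x - y / lam)] when both are left of it. *)
Lemma Phi_move_pair s U i r x y : (S i < k)%nat ->
  0 <= x -> 0 <= y -> lam * x <= y -> lam * y <= x ->
  s (S i) + x <= r <= s (S (S i)) - y ->
  (r <= nth i U 0 /\ r <= nth (S i) U 0) \/ (nth i U 0 <= r /\ nth (S i) U 0 <= r) ->
  x + y + Phi lam k (upd (upd s (S i) (s (S i) + x)) (S (S i)) (s (S (S i)) - y)) U
  <= Phi lam k s U.
Proof.
  intros Hi Hx Hy Hxy Hyx Hr Hside.
  rewrite (Phi_upd lam k lam_pos), upd_neq, (Phi_upd lam k lam_pos) by lia.
  unfold match_weight. replace (k - i)%nat with (S (k - S i)) by lia.
  rewrite (beta_S lam lam_pos (S i)), (beta_S lam lam_pos (k - S i)).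
  set (A := beta lam (S i)). set (C := beta lam (k - S i)).
  set (a := s (S i)) in *. set (b := s (S (S i))) in *.
  set (u := nth i U 0) in *. set (u' := nth (S i) U 0) in *.
  assert (HA : 1 <= A) by (apply beta_ge_1; lra || lia).
  assert (HC : 0 <= C) by (apply beta_nonneg; lra).
  assert (Hlm : lam * / lam = 1) by (field; lra).
  assert (Hy' : y <= / lam * x) by nra.
  assert (Hx' : x <= / lam * y) by nra.
  destruct Hside as [[Hu Hu'] | [Hu Hu']].
  - assert (E1 : Rabs (a + x - u) - Rabs (a - u) = - x)
      by (unfold Rabs; repeat destruct Rcase_abs; lra).
    assert (H2 : Rabs (b - y - u') - Rabs (b - u') <= y)
      by (unfold Rabs; repeat destruct Rcase_abs; lra).
    rewrite E1.
    apply Rmult_le_compat_l with (r := 1 + / lam * A + C - 1) in H2; [|nra].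
    assert (C * y <= C * (/ lam * x)) by (apply Rmult_le_compat_l; lra).
    lra.
  - assert (H1 : Rabs (a + x - u) - Rabs (a - u) <= x)
      by (unfold Rabs; repeat destruct Rcase_abs; lra).
    assert (E2 : Rabs (b - y - u') - Rabs (b - u') = - y)
      by (unfold Rabs; repeat destruct Rcase_abs; lra).
    rewrite E2.
    apply Rmult_le_compat_l with (r := A + (1 + / lam * C) - 1) in H1; [|nra].
    assert (A * x <= A * (/ lam * y)) by (apply Rmult_le_compat_l; lra).
    lra.
Qed.

Lemma pair_step_amortized s U r i va vb : sorted_on k s -> (S i < k)%nat ->
  s (S i) < r < s (S (S i)) -> 0 < va -> 0 < vb -> lam * va <= vb -> lam * vb <= va ->
  (r <= nth i U 0 /\ r <= nth (S i) U 0) \/ (nth i U 0 <= r /\ nth (S i) U 0 <= r) ->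
  let t := Rmin ((r - s (S i)) / va) ((s (S (S i)) - r) / vb) in
  let s' := upd (upd s (S i) (s (S i) + va * t)) (S (S i)) (s (S (S i)) - vb * t) in
  sorted_on k s' /\ (va + vb) * t + Phi lam k s' U <= Phi lam k s U.
Proof.
  intros Hs Hi Hr Hva Hvb Hab Hba Hside t s'.
  destruct (Rmin_div_bounds (r - s (S i)) (s (S (S i)) - r) va vb) as [Ht [Hx Hy]]; try lra.
  fold t in Ht, Hx, Hy. split.
  - apply sorted_on_upd; [apply sorted_on_upd| lia | |].
    + exact Hs.
    + lia.
    + intros. assert (s (S i - 1)%nat <= s (S i)) by (apply Hs; lia). nra.
    + intros. lra.
    + intros. replace (S (S i) - 1)%nat with (S i) by lia. rewrite upd_eq. lra.
    + intros. rewrite upd_neq by lia.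
      assert (s (S (S i)) <= s (S (S (S i)))) by (apply Hs; lia). nra.
  - rewrite Rmult_plus_distr_r. apply (Phi_move_pair s U i r); auto; nra.
Qed.

Lemma ldc_step_amortized s U r p s' c : sorted_on k s -> Sorted Rle U -> length U = k ->
  In r U -> ldc_step lam k s r p = (s', c) ->
  sorted_on k s' /\ c + Phi lam k s' U <= Phi lam k s U.
Proof.
  intros Hs HU HUk Hr Hstep.
  destruct (sorted_In_bounds U r HU Hr) as [Hfirst Hlast]. rewrite HUk in Hlast.
  unfold ldc_step in Hstep. destruct Rlt_dec as [Hr1|Hr1]; [|destruct Rlt_dec as [Hrk|Hrk]].
  - injection Hstep as <- <-. split.
    + apply sorted_on_upd; [exact Hs | lia | intros; lia |].
      intros. assert (s 1%nat <= s 2%nat) by (apply Hs; lia). lra.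
    + rewrite <- (Phi_move_first s U r) by lra. lra.
  - injection Hstep as <- <-. split.
    + apply sorted_on_upd; [exact Hs | lia | | intros; lia].
      intros. assert (s (k - 1)%nat <= s k) by (apply Hs; lia). lra.
    + rewrite <- (Phi_move_last s U r) by lra. lra.
  - destruct (find_gap s r (k - 1)) as [i|] eqn:Hgap.
    + destruct (find_gap_spec s r (k - 1) i Hgap) as [Hi Hri].
      destruct i as [|i]; [lia|].
      assert (Hside := sorted_In_same_side U r i HU Hr ltac:(lia)).
      destruct (Nat.leb p (S i)); injection Hstep as <- <-;
        apply pair_step_amortized; auto; try lia; nra.
    + injection Hstep as <- <-. split; [exact Hs | lra].
Qed.

Lemma Phi_offline_move s o o' T : Permutation T (seq 1 k) -> Sorted Rle (map o T) ->
  exists W, Permutation W T /\ Sorted Rle (map o' W) /\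
    Phi lam k s (map o' W)
    <= Phi lam k s (map o T) + beta lam k * sumR k (fun j => Rabs (o' (S j) - o (S j))).
Proof.
  intros HT Ho.
  assert (HTk : length T = k) by (rewrite (Permutation_length HT), length_seq; reflexivity).
  destruct (sort_by_match_dist_le nat o' T (map o T) Ho) as [W [HWT [HW Hd]]];
    [rewrite length_map; reflexivity|].
  exists W. split; [exact HWT|]. split; [exact HW|].
  eapply Rle_trans.
  { apply Phi_match_dist_le; [exact lam_pos | exact lam_le_1 | |];
      rewrite length_map; [exact HTk | rewrite (Permutation_length HWT); exact HTk]. }
  apply Rplus_le_compat_l, Rmult_le_compat_l; [apply beta_nonneg, lam_pos|].
  rewrite (match_dist_perm nat o' o T (seq 1 k) HT), match_dist_seq in Hd. exact Hd.
Qed.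

Lemma ldc_cost_amortized ps rs : forall t s T sched,
  sorted_on k s -> Permutation T (seq 1 k) -> Sorted Rle (map (sched 0%nat) T) ->
  serves k rs sched ->
  ldc_cost lam k s rs ps t
  <= beta lam k * sched_cost k rs sched + Phi lam k s (map (sched 0%nat) T).
Proof.
  induction rs as [|r rs IH]; intros t s T sched Hs HT HU Hserve.
  - unfold sched_cost. simpl.
    pose proof (Phi_nonneg lam k lam_pos lam_le_1 s (map (sched 0%nat) T) Hs). lra.
  - destruct (Phi_offline_move s (sched 0%nat) (sched 1%nat) T HT HU) as [W [HWT [HW HPhi]]].
    assert (Hr : In r (map (sched 1%nat) W)).
    { destruct (Hserve 0%nat ltac:(simpl; lia)) as [j [Hj Hjr]].
      simpl in Hjr. rewrite <- Hjr. apply in_map.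
      apply (Permutation_in j (Permutation_sym (perm_trans HWT HT))), in_seq. lia. }
    assert (HWk : length (map (sched 1%nat) W) = k)
      by (rewrite length_map, (Permutation_length (perm_trans HWT HT)), length_seq; reflexivity).
    simpl ldc_cost. destruct (ldc_step lam k s r (ps t)) as [s' c] eqn:Hstep.
    destruct (ldc_step_amortized s (map (sched 1%nat) W) r (ps t) s' c Hs HW HWk Hr Hstep)
      as [Hs' Hc].
    assert (IH' := IH (S t) s' W (fun t => sched (S t)) Hs' (perm_trans HWT HT) HW
      (fun t' Ht' => Hserve (S t') ltac:(simpl; lia))).
    rewrite sched_cost_cons.
    pose proof (beta_nonneg lam lam_pos k). lra.
Qed.

Lemma LambdaDC_le_sched_cost s0 rs ps sched : sorted_on k s0 -> feasible k s0 rs sched ->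
  LambdaDC lam k s0 rs ps
  <= beta lam k * sched_cost k rs sched + Phi lam k s0 (map s0 (seq 1 k)).
Proof.
  intros Hs [Hinit Hserve].
  assert (Hsorted : Sorted Rle (map s0 (seq 1 k)))
    by (apply sorted_map_seq; intros; apply Hs; lia).
  replace (map s0 (seq 1 k)) with (map (sched 0%nat) (seq 1 k)) in *
    by (apply map_ext_in; intros j Hj; apply in_seq in Hj; apply Hinit; lia).
  apply ldc_cost_amortized; auto using Permutation_refl.
Qed.

End Amortization.

Lemma Glb_Rbar_affine_lb (E : R -> Prop) x b c y0 : 0 < b -> E y0 ->
  (forall y, E y -> x <= b * y + c) -> x <= b * real (Glb_Rbar E) + c.
Proof.
  intros Hb Hy0 HE. destruct (Glb_Rbar_correct E) as [Hlb Hglb].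
  assert (Hup : Rbar_le (Glb_Rbar E) y0) by (apply Hlb, Hy0).
  assert (Hdown : Rbar_le ((x - c) / b) (Glb_Rbar E)).
  { apply Hglb. intros y Hy. simpl. apply (Rmult_le_reg_l b); [exact Hb|].
    specialize (HE y Hy). field_simplify; lra. }
  destruct (Glb_Rbar E) as [g| |]; simpl in Hup, Hdown |- *; try contradiction.
  apply (Rmult_le_compat_l b) in Hdown; [|lra]. field_simplify in Hdown; lra.
Qed.

Lemma feasible_exists k s0 rs : (1 <= k)%nat -> exists sched, feasible k s0 rs sched.
Proof.
  intros Hk.
  exists (fun t j => match t with
                     | O => s0 j
                     | S t' => if Nat.eqb j 1 then nth t' rs 0 else s0 j
                     end).
  split; [reflexivity|]. intros t _. exists 1%nat. split; [lia | reflexivity].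
Qed.

Theorem lemma9 :
  forall (k : nat) (lam : R) (s0 : nat -> R),
    (1 <= k)%nat ->
    0 < lam <= 1 ->
    (forall i j, (1 <= i)%nat -> (i <= j)%nat -> (j <= k)%nat -> s0 i <= s0 j) ->
    exists c : R, 0 <= c /\
      forall (rs : list R) (ps : nat -> nat),
        (forall t, (1 <= ps t <= k)%nat) ->
        LambdaDC lam k s0 rs ps <= beta lam k * OPT k s0 rs + c.
Proof.
  intros k lam s0 Hk [Hl0 Hl1] Hs0.
  exists (Phi lam k s0 (map s0 (seq 1 k))). split; [apply Phi_nonneg; assumption|].
  intros rs ps _.
  destruct (feasible_exists k s0 rs Hk) as [sched0 Hsched0].
  apply (Glb_Rbar_affine_lb _ _ _ _ (sched_cost k rs sched0)).
  - pose proof (beta_ge_1 lam Hl0 Hl1 k Hk). lra.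
  - exists sched0. split; [exact Hsched0 | reflexivity].
  - intros y [sched [Hf ->]]. apply LambdaDC_le_sched_cost; assumption.
Qed.
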